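(* Assume the standing setting in the context and, in addition, that $\Omega$ is a strictly convex bounded domain and $\Lambda$ is a uniformly convex bounded domain with $C^{1,1}$ boundary. Then $$\nabla\tilde\Psi_m(A_2)\subset\partial\big(P_\Lambda(\Omega)\cap\partial\Lambda\big)\setminus\partial\big(\partial(\Omega\cap\Lambda)\cap\partial\Lambda\big).$$
   Context: Let $f,g\in L^1(\mathbb{R}^n)$ be nonnegative with compact support, $\Omega:=\{f>0\}$, $\Lambda:=\{g>0\}$. Standing assumption: $\Omega,\Lambda$ bounded, open, strictly convex, and $f,g$ bounded away from zero and infinity on $\Omega,\Lambda$. Fix $m$ with $\|\min\{f,g\}\|_{L^1}\le m\le\min\{\|f\|_{L^1},\|g\|_{L^1}\}$. The unique minimizer of $\int|x-y|^2d\gamma$ among nonnegative Borel measures of mass $m$ on $\mathbb{R}^n\times\mathbb{R}^n$ with $\gamma(A\times\mathbb{R}^n)\le\int_Af$, $\gamma(\mathbb{R}^n\times A)\le\int_Ag$ is $\gamma_m=(\mathrm{Id}\times\nabla\Psi_m)_\#f_m=(\nabla\Psi_m^*\times\mathrm{Id})_\#g_m$, $\Psi_m$ convex, $0\le f_m\le f$, $0\le g_m\le g$, $(\nabla\Psi_m)_\#f_m=g_m$, $\Psi^*$ the Legendre transform. With $F_m,G_m$ the density points of $\{f_m>0\},\{g_m>0\}$, $D_{\nabla\Psi_m},D_{\nabla\Psi_m^*}$ continuity points, $\Gamma_m:=(\mathrm{Id}\times\nabla\Psi_m)(F_m\cap D_{\nabla\Psi_m})\cap(\nabla\Psi_m^*\times\mathrm{Id})(G_m\cap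 D_{\nabla\Psi_m^*})$, set $U_m:=(\Omega\cap\Lambda)\cup\bigcup_{(\bar x,\bar y)\in\Gamma_m}B_{|\bar x-\bar y|}(\bar y)$, $V_m:=(\Omega\cap\Lambda)\cup\bigcup_{(\bar x,\bar y)\in\Gamma_m}B_{|\bar x-\bar y|}(\bar x)$. $\tilde\Psi_m$ is the convex $C^1(\mathbb{R}^n)$ extension of $\Psi_m$ (Figalli) with $\tilde\Psi_m=\Psi_m$ on $U_m\cap\Omega$, $\nabla\tilde\Psi_m(x)=x$ on $\Lambda\setminus\overline{V_m}$, $\nabla\tilde\Psi_m(\mathbb{R}^n)=\overline\Lambda$, $\nabla\tilde\Psi_m:\overline{U_m\cap\Omega}\to\overline{V_m\cap\Lambda}$ a homeomorphism with inverse $\nabla\tilde\Psi_m^*$. Definitions: $\partial_{nt}\Lambda:=\{y\in\partial\Lambda\cap\overline{\Lambda\cap\partial V_m}:\langle\nabla\tilde\Psi_m^*(y)-y,z-y\rangle\le0\ \forall z\in\Lambda\}$; for $x\in\partial(\Omega\cap U_m)$ with $\nabla\tilde\Psi_m(x)\ne x$, $L(x):=\{\nabla\tilde\Psi_m(x)+t\frac{x-\nabla\tilde\Psi_m(x)}{|x-\nabla\tilde\Psi_m(x)|}:t\ge0\}$; $K:=\{x\in\partial(\Omega\cap U_m):\nabla\tilde\Psi_m(x)\ne x,\ L(x)\cap\overline{\Omega\cap U_m}\subset\partial(\overline{\Omega\cap U_m})\}$; $S_1:=(\nabla\tilde\Psi_m)^{-1}(\partial_{nt}\Lambda)\cap K$;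 $A_2:=S_1\setminus\partial U_m$. $P_\Lambda$ is the nearest-point projection onto $\overline\Lambda$; for $E\subset\partial\Lambda$, $\partial E$ denotes the boundary of $E$ relative to $\partial\Lambda$. *)

From HB Require Import structures.
From mathcomp Require Import all_boot all_order all_algebra.
From mathcomp Require Import all_classical all_reals all_analysis.
Set Implicit Arguments. Unset Strict Implicit. Unset Printing Implicit Defensive.
Import Order.TTheory GRing.Theory Num.Theory.
Import numFieldNormedType.Exports.
Local Open Scope classical_set_scope.
Local Open Scope ring_scope.

Section Rn.
Variables (R : realType) (n : nat).
Local Notation E := 'rV[R]_n.

(* Borel sigma-algebra on R^n (generated by the open sets of the usual
   (product = Euclidean) topology of 'rV[R]_n). *)
HB.instance Definition _ := @isMeasurable.Build (sigma_display (@open E)) E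
  <<s @open E >> (@sigma_algebra0 _ setT (@open E)) (@sigma_algebraC _ (@open E))
  (@sigma_algebra_bigcup _ setT (@open E)).

Definition dotv (x y : E) : R := \sum_(i < n) x ord0 i * y ord0 i.
Definition enorm (x : E) : R := Num.sqrt (dotv x x).
Definition eball (c : E) (r : R) : set E := [set x | enorm (x - c) < r].

Definition box (a b : E) : set E := [set x | forall i, a ord0 i <= x ord0 i <= b ord0 i].

Definition is_lebesgue (leb : {measure set E -> \bar R}) : Prop :=
  forall a b : E, (forall i, a ord0 i <= b ord0 i) ->
    leb (box a b) = (\prod_(i < n) (b ord0 i - a ord0 i))%:E.

Definition bdry (A : set E) : set E := closure A `\` interior A.

(* boundary of A relative to S (A is a subset of S) *)
Definition relbdry (S A : set E) : set E :=
  [set x | S x /\ closure A x /\ ~ (A x /\ exists r, 0 < r /\ eball x r `&` S `<=` A)].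

Definition ebounded (A : set E) : Prop := exists M : R, forall x, A x -> enorm x <= M.

Definition strictly_convex_set (A : set E) : Prop :=
  forall x y, closure A x -> closure A y -> x != y ->
    forall t : R, 0 < t < 1 -> A (t *: x + (1 - t) *: y).

Definition uniformly_convex_set (A : set E) : Prop :=
  exists c : R, 0 < c /\ forall x y, closure A x -> closure A y ->
    eball ((2 : R)^-1 *: (x + y)) (c * enorm (x - y) ^+ 2) `<=` A.

Definition has_grad (phi : E -> R) (x p : E) : Prop :=
  forall eps : R, 0 < eps -> exists delta : R, 0 < delta /\
    forall h : E, enorm h < delta ->
      `|phi (x + h) - phi x - dotv p h| <= eps * enorm h.

Definition rgrad (phi : E -> R) (x : E) : E := xget 0 [set p | has_grad phi x p].

(* bounded domain with C^{1,1} boundary (global defining function) *)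
Definition C11_boundary (A : set E) : Prop :=
  exists (rho : E -> R) (G : E -> E),
    (forall x, has_grad rho x (G x)) /\
    (exists L : R, forall x y, enorm (G x - G y) <= L * enorm (x - y)) /\
    A = [set x | rho x < 0] /\
    (forall x, bdry A x -> G x != 0).

Definition is_domain (A : set E) : Prop := open A /\ connected A /\ A !=set0.

Definition rconvex (phi : E -> R) : Prop :=
  forall x y (t : R), 0 <= t <= 1 -> phi (t *: x + (1 - t) *: y) <= t * phi x + (1 - t) * phi y.

Definition econvex (phi : E -> \bar R) : Prop :=
  (forall x, phi x != -oo%E) /\
  forall (x y : E) (t : R), 0 <= t <= 1 ->
    (phi (t *: x + (1 - t) *: y)%R <= t%:E * phi x + (1 - t)%:E * phi y)%E.

Definition legendre (phi : E -> \bar R) (y : E) : \bar R :=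
  ereal_sup [set ((dotv x y)%:E - phi x)%E | x in [set: E]].

Definition has_egrad (phi : E -> \bar R) (x p : E) : Prop :=
  (exists r : R, 0 < r /\ forall z, enorm (z - x) < r -> phi z \is a fin_num) /\
  has_grad (fun z => fine (phi z)) x p.
Definition edifferentiable (phi : E -> \bar R) (x : E) : Prop := exists p, has_egrad phi x p.
Definition egrad (phi : E -> \bar R) (x : E) : E := xget 0 [set p | has_egrad phi x p].

Definition grad_cont_pts (phi : E -> \bar R) : set E :=
  [set x | edifferentiable phi x /\
    forall eps : R, 0 < eps -> exists delta : R, 0 < delta /\
      forall z, edifferentiable phi z -> enorm (z - x) < delta ->
        enorm (egrad phi z - egrad phi x) < eps].

Definition density_pts (leb : {measure set E -> \bar R}) (S : set E) : set E :=
  [set x | (fun r : R => fine (leb (S `&` eball x r)) / fine (leb (eball x r)))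
             @ (0 : R)^'+ --> (1 : R)].

Definition pos_set (h : E -> R) : set E := [set x | 0 < h x].

Definition admissible (leb : {measure set E -> \bar R}) (f g : E -> R) (m : R)
  (gam : {measure set (E * E)%type -> \bar R}) : Prop :=
  gam setT = m%:E /\
  (forall A : set E, measurable A -> (gam (A `*` setT) <= \int[leb]_(x in A) (f x)%:E)%E) /\
  (forall A : set E, measurable A -> (gam (setT `*` A) <= \int[leb]_(x in A) (g x)%:E)%E).

Definition cost (gam : {measure set (E * E)%type -> \bar R}) : \bar R :=
  (\int[gam]_z (enorm (z.1 - z.2) ^+ 2)%:E)%E.

Definition Gamma_set (leb : {measure set E -> \bar R}) (Psi : E -> \bar R) (fm gm : E -> R)
  : set (E * E) :=
  [set p | (exists x, density_pts leb (pos_set fm) x /\ grad_cont_pts Psi x /\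
                      p = (x, egrad Psi x)) /\
           (exists y, density_pts leb (pos_set gm) y /\ grad_cont_pts (legendre Psi) y /\
                      p = (egrad (legendre Psi) y, y))].

Definition U_set (Om La : set E) (Gam : set (E * E)) : set E :=
  (Om `&` La) `|` \bigcup_(p in Gam) eball p.2 (enorm (p.1 - p.2)).
Definition V_set (Om La : set E) (Gam : set (E * E)) : set E :=
  (Om `&` La) `|` \bigcup_(p in Gam) eball p.1 (enorm (p.1 - p.2)).

Definition inv_on (T : E -> E) (D : set E) (y : E) : E := xget 0 [set x | D x /\ T x = y].

Definition proj_on (La : set E) (x : E) : E :=
  xget 0 [set y | closure La y /\ forall z, closure La z -> enorm (x - y) <= enorm (x - z)].

(* d_nt Lambda, with Tinv standing for grad tilde Psi^* *)
Definition bd_nt (La V : set E) (Tinv : E -> E) : set E :=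
  [set y | bdry La y /\ closure (La `&` bdry V) y /\
           forall z, La z -> dotv (Tinv y - y) (z - y) <= 0].

Definition ray_L (T : E -> E) (x : E) : set E :=
  [set T x + t *: ((enorm (x - T x))^-1 *: (x - T x)) | t in [set t : R | 0 <= t]].

Definition K_set (OU : set E) (T : E -> E) : set E :=
  [set x | bdry OU x /\ T x != x /\ ray_L T x `&` closure OU `<=` bdry (closure OU)].

End Rn.

From HB Require Import structures.
From mathcomp Require Import all_boot all_order all_algebra.
From mathcomp Require Import all_classical all_reals all_analysis.
From mathcomp Require Import ring lra.
Import Order.TTheory GRing.Theory Num.Theory.
Import numFieldNormedType.Exports.
Local Open Scope classical_set_scope.
Local Open Scope ring_scope.

(* Let x be in A2 and y := grad Psit x.  As x is interior to U but on the boundary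
   of Om `&` U, it lies outside Om, and the ray from y through x meets closure Om
   only at x: strict convexity of Om would otherwise put points of Om `&` U close
   to x on the ray, in the interior of closure (Om `&` U), against x in K.  Hence
   y is not in closure Om, which excludes the second relative boundary.  Since y is
   in d_nt La, x - y is an outer normal of La at y, i.e. y = P_La x.  Points of Om
   near x lie outside closure La and, P_La being 1-Lipschitz, project to boundary
   points near y.  Finally y = P_La w with w in Om is impossible: the normal cone
   of the C^{1,1} domain La at y is a half-line, so w would lie on the ray. *)

Set Implicit Arguments.
Unset Strict Implicit.
Unset Printing Implicit Defensive.

Section Euclid.
Variables (R : realType) (n : nat).
Local Notation E := 'rV[R]_n.
Implicit Types (u v w x y z : E) (A : set E).

Lemma dotvC u v : dotv u v = dotv v u.
Proof. by apply: eq_bigr => i _; rewrite mulrC. Qed.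

Lemma dotvDl u v w : dotv (u + v) w = dotv u w + dotv v w.
Proof. by rewrite /dotv -big_split; apply: eq_bigr => i _; rewrite !mxE mulrDl. Qed.

Lemma dotvZl (a : R) u v : dotv (a *: u) v = a * dotv u v.
Proof. by rewrite /dotv mulr_sumr; apply: eq_bigr => i _; rewrite !mxE mulrA. Qed.

Lemma dotvNl u v : dotv (- u) v = - dotv u v.
Proof. by rewrite -scaleN1r dotvZl mulN1r. Qed.

Lemma dotvBl u v w : dotv (u - v) w = dotv u w - dotv v w.
Proof. by rewrite dotvDl dotvNl. Qed.

Lemma dotvDr u v w : dotv u (v + w) = dotv u v + dotv u w.
Proof. by rewrite dotvC dotvDl !(dotvC u). Qed.

Lemma dotvZr (a : R) u v : dotv u (a *: v) = a * dotv u v.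
Proof. by rewrite dotvC dotvZl dotvC. Qed.

Lemma dotvNr u v : dotv u (- v) = - dotv u v.
Proof. by rewrite dotvC dotvNl dotvC. Qed.

Lemma dotvBr u v w : dotv u (v - w) = dotv u v - dotv u w.
Proof. by rewrite dotvC dotvBl !(dotvC u). Qed.

Lemma dotvv_subZ u v (t : R) :
  dotv (u - t *: v) (u - t *: v) = dotv u u - 2 * t * dotv u v + t ^+ 2 * dotv v v.
Proof. by rewrite dotvBl !dotvBr !dotvZl !dotvZr (dotvC v u); ring. Qed.

Lemma dotv0r u : dotv u 0 = 0.
Proof. by rewrite -(scale0r 0) dotvZr mul0r. Qed.

Lemma dotvv_ge0 u : 0 <= dotv u u.
Proof. by apply: sumr_ge0 => i _; rewrite -expr2 sqr_ge0. Qed.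

Lemma dotvv_eq0 u : (dotv u u == 0) = (u == 0).
Proof.
apply/idP/eqP => [|->]; last by rewrite dotv0r.
rewrite psumr_eq0 => [/allP uu0|i _]; last by rewrite -expr2 sqr_ge0.
apply/rowP => i; rewrite mxE.
by apply/eqP; rewrite -sqrf_eq0 expr2; exact: uu0 (mem_index_enum _).
Qed.

Lemma dotvv_gt0 u : (0 < dotv u u) = (u != 0).
Proof. by rewrite lt_def dotvv_ge0 andbT dotvv_eq0. Qed.

Lemma enorm_ge0 u : 0 <= enorm u.
Proof. exact: sqrtr_ge0. Qed.

Lemma enorm_eq0 u : (enorm u == 0) = (u == 0).
Proof. by rewrite sqrtr_eq0 -dotvv_eq0 eq_le dotvv_ge0 andbT. Qed.

Lemma ler_enorm u v : (enorm u <= enorm v) = (dotv u u <= dotv v v).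
Proof. by rewrite ler_sqrt // dotvv_ge0. Qed.

Lemma enormZ (a : R) u : enorm (a *: u) = `|a| * enorm u.
Proof. by rewrite /enorm dotvZl dotvZr mulrA -expr2 sqrtrM ?sqr_ge0 // sqrtr_sqr. Qed.

Lemma enormB u v : enorm (u - v) = enorm (v - u).
Proof. by rewrite -opprB -scaleN1r enormZ normrN1 mul1r. Qed.

Lemma ler_dotv_enorm u v : `|dotv u v| <= enorm u * enorm v.
Proof.
have [->|v0] := eqVneq v 0; first by rewrite dotv0r normr0 mulr_ge0 ?enorm_ge0.
have vv0 : 0 < dotv v v by rewrite dotvv_gt0.
have : dotv u v ^+ 2 <= dotv u u * dotv v v.
  have := dotvv_ge0 (u - (dotv u v / dotv v v) *: v); rewrite dotvv_subZ.
  set a := dotv u v; set b := dotv v v.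
  have -> : dotv u u - 2 * (a / b) * a + (a / b) ^+ 2 * b =
            (dotv u u * b - a ^+ 2) / b by field; rewrite gt_eqF.
  by rewrite pmulr_lge0 ?invr_gt0 // subr_ge0.
by rewrite -ler_sqrt ?mulr_ge0 ?dotvv_ge0 // sqrtr_sqr sqrtrM ?dotvv_ge0.
Qed.

Lemma ler_coord_normr u i : `|u ord0 i| <= `|u|.
Proof.
have -> : `|u| = \big[Num.max/0]_ij `|u ij.1 ij.2| := mx_normrE u.
by apply/bigmax_geP; right; exists (ord0, i).
Qed.

Lemma normr_le_enorm u : `|u| <= enorm u.
Proof.
have [->|/mx_norm_neq0 [[i j] /= uij]] := eqVneq `|u| 0; first exact: enorm_ge0.
rewrite [`|u|]uij (ord1 i) -sqrtr_sqr ler_sqrt ?dotvv_ge0 // /dotv (bigD1 j) //= -expr2.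
by rewrite lerDl sumr_ge0 // => k _; rewrite -expr2 sqr_ge0.
Qed.

Lemma enorm_le_normr u : enorm u <= n.+1%:R * `|u|.
Proof.
rewrite -[X in _ <= X]ger0_norm ?mulr_ge0 // -sqrtr_sqr ler_sqrt ?sqr_ge0 //.
apply: (@le_trans _ _ (\sum_(i < n) `|u| ^+ 2)).
  apply: ler_sum => i _; rewrite -expr2 -real_normK ?num_real //.
  by rewrite lerXn2r ?nnegrE // ler_coord_normr.
rewrite sumr_const card_ord -mulr_natl -natr1.
have := ler0n R n; have := normr_ge0 u; nra.
Qed.

Lemma exists_small_scale (c e : R) : 0 <= c -> 0 < e ->
  exists2 s : R, 0 < s < 1 & s * c < e.
Proof.
move=> c0 e0; have ce0 : 0 < 2 * (c + e) by lra.
exists (e / (2 * (c + e))); last by rewrite mulrAC ltr_pdivrMr //; nra.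
by rewrite divr_gt0 //= ltr_pdivrMr //; lra.
Qed.

Lemma nbhs_eball x N : nbhs x N -> exists2 e, 0 < e & eball x e `<=` N.
Proof.
move=> /nbhs_normP [e e0 eN]; exists e => // z xz; apply: eN.
by apply: le_lt_trans xz; rewrite enormB normr_le_enorm.
Qed.

Lemma closure_eball A x e : closure A x -> 0 < e ->
  exists2 z, A z & enorm (z - x) < e.
Proof.
move=> Ax e0; have e'0 : 0 < e / n.+1%:R by rewrite divr_gt0.
have [z [Az]] := Ax _ (nbhsx_ballx x _ e'0).
rewrite -ball_normE /= => xz; exists z => //.
by rewrite enormB (le_lt_trans (enorm_le_normr _)) // mulrC -ltr_pdivlMr.
Qed.

Lemma ebounded_compact_closure A : ebounded A -> compact (closure A).
Proof.
move=> [M AM]; apply: bounded_closed_compact; last exact: closed_closure.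
apply: filterS (nbhs_pinfty_ge (num_real (M + 1))) => r Mr z.
move=> /closure_eball /(_ ltr01) [v Av vz] /=.
rewrite -(subrK v z) (le_trans (ler_normD _ _)) // (le_trans _ Mr) // addrC.
by rewrite lerD ?(le_trans (normr_le_enorm _)) ?AM // enormB ltW.
Qed.

Lemma continuous_sqr_dist w : continuous (fun z : E => dotv (w - z) (w - z)).
Proof.
have -> : (fun z : E => dotv (w - z) (w - z)) =
    \sum_(i < n) (fun z : E => (w ord0 i - z ord0 i) * (w ord0 i - z ord0 i)).
  by apply/funext => z; rewrite fct_sumE; apply: eq_bigr => i _; rewrite !mxE.
apply: (big_ind (fun h : E -> R => continuous h)) => [x|h1 h2 h1c h2c x|i _ x].
- exact: cst_continuous.
- exact: (continuousD (h1c x) (h2c x)).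
- have wz : {for x, continuous (fun z : E => w ord0 i - z ord0 i)}.
    by apply: continuousB; [exact: cst_continuous | exact: coord_continuous].
  exact: (continuousM wz wz).
Qed.
End Euclid.

Section NormalCone.
Variables (R : realType) (n : nat).
Local Notation E := 'rV[R]_n.
Implicit Types (u v w x y z p : E) (A : set E).

Definition normal_at A y u : Prop := forall z, A z -> dotv u (z - y) <= 0.

Lemma proj_onP A w : A !=set0 -> ebounded A ->
  closure A (proj_on A w) /\
  forall z, closure A z -> enorm (w - proj_on A w) <= enorm (w - z).
Proof.
move=> [a Aa] Abd; apply: (xgetPex 0 (P := [set p | closure A p /\
  forall z, closure A z -> enorm (w - p) <= enorm (w - z)])).
have [p Ap pmin] := EVT_min_rV (ex_intro _ a (subset_closure Aa))
  (ebounded_compact_closure Abd) (continuous_subspaceT (@continuous_sqr_dist _ _ w)).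
by exists p; rewrite inE in Ap; split => // z Az; rewrite ler_enorm pmin ?inE.
Qed.

Lemma normal_at_proj A w p : strictly_convex_set A -> closure A p ->
  (forall z, closure A z -> enorm (w - p) <= enorm (w - z)) ->
  normal_at (closure A) p (w - p).
Proof.
move=> Asc Ap pmin z Az; have [->|zp] := eqVneq z p; first by rewrite subrr dotv0r.
set a := dotv (w - p) (z - p); set b := dotv (z - p) (z - p).
rewrite leNgt; apply/negP => a0; have b0 : 0 <= b := dotvv_ge0 _.
(* moving from p towards z by t decreases the distance to w at first order *)
have ab0 : 0 < 2 * (a + b) by lra.
pose t := a / (2 * (a + b)).
have t0 : 0 < t by rewrite divr_gt0.
have tab : t * (2 * (a + b)) = a by rewrite mulfVK ?gt_eqF.
have t1 : t < 1 by nra.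
have := pmin _ (subset_closure (Asc z p Az Ap zp t (introT andP (conj t0 t1)))).
have -> : w - (t *: z + (1 - t) *: p) = (w - p) - t *: (z - p).
  by apply/rowP => i; rewrite !mxE; ring.
rewrite ler_enorm dotvv_subZ -/a -/b; nra.
Qed.

Lemma normal_at_closure A y u : strictly_convex_set A -> closure A y ->
  normal_at A y u -> normal_at (closure A) y u.
Proof.
move=> Asc Ay Au z Az; have [->|zy] := eqVneq z y; first by rewrite subrr dotv0r.
have half : 0 < (2^-1 : R) < 1 by apply/andP; split; lra.
have := Au _ (Asc z y Az Ay zy _ half).
have -> : 2^-1 *: z + (1 - 2^-1) *: y - y = 2^-1 *: (z - y).
  by apply/rowP => i; rewrite !mxE; ring.
by rewrite dotvZr pmulr_rle0 ?invr_gt0.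
Qed.

Lemma normal_at_self A x y : normal_at A y (x - y) -> A x -> x = y.
Proof.
move=> yx /yx xy; apply/eqP; rewrite -subr_eq0 -dotvv_eq0 eq_le xy.
exact: dotvv_ge0.
Qed.

Lemma normal_at_nonexpansive A x y w p : A y -> A p ->
  normal_at A y (x - y) -> normal_at A p (w - p) -> enorm (p - y) <= enorm (w - x).
Proof.
move=> Ay Ap /(_ p Ap) yp /(_ y Ay); rewrite -(opprB p y) dotvNr => py.
have -> : w - x = (w - p) - (x - y) + (p - y) by apply/rowP => i; rewrite !mxE; ring.
rewrite ler_enorm; move: (w - p) (x - y) (p - y) yp py => a b d bd ad.
have := dotvv_ge0 (a - b).
rewrite !(dotvDl, dotvDr, dotvNl, dotvNr) (dotvC d a) (dotvC d b) (dotvC b a); lra.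
Qed.

Lemma normal_at_bdry A w p : closure A p ->
  normal_at (closure A) p (w - p) -> ~ closure A w -> bdry A p.
Proof.
move=> Ap pw Aw; split => // /nbhs_eball [e e0 eA].
have [s /andP [s0 _] se] := exists_small_scale (enorm_ge0 (w - p)) e0.
have Aps : A (p + s *: (w - p)).
  by apply: eA; rewrite /eball /= (addrC p) addrK enormZ gtr0_norm.
have := pw _ (subset_closure Aps); rewrite (addrC p) addrK dotvZr pmulr_rle0 // => wp.
have : w - p == 0 by rewrite -dotvv_eq0 eq_le wp dotvv_ge0.
by rewrite subr_eq0 => /eqP wp_eq; apply: Aw; rewrite wp_eq.
Qed.

End NormalCone.

Section SmoothBoundary.
Variables (R : realType) (n : nat).
Local Notation E := 'rV[R]_n.
Implicit Types (u v w y G : E) (rho : E -> R).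

Lemma has_grad_closure_sublevel rho y G :
  has_grad rho y G -> closure [set x | rho x < 0] y -> rho y <= 0.
Proof.
move=> dG cly; rewrite leNgt; apply/negP => ry0.
have [d [d0 Hd]] := dG 1 ltr01; pose M := enorm G + 1.
have M0 : 0 < M by rewrite ltr_wpDl ?enorm_ge0.
have e0 : 0 < Num.min d (rho y / M) by rewrite lt_min d0 divr_gt0.
have [z /= rz] := closure_eball cly e0; rewrite lt_min => /andP [zd].
rewrite ltr_pdivlMr // => zM.
have := Hd _ zd; rewrite (addrC y) subrK mul1r => /ler_normlP [+ _].
have /ler_normlP [+ _] := ler_dotv_enorm G (z - y).
have := enorm_ge0 (z - y); rewrite /M in zM; nra.
Qed.

Lemma normal_at_sublevel rho y G u : has_grad rho y G -> rho y <= 0 ->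
  normal_at [set x | rho x < 0] y u -> forall w, dotv G w < 0 -> dotv u w <= 0.
Proof.
move=> dG ry yu w Gw; have W1 : 0 < enorm w + 1 by rewrite ltr_wpDl ?enorm_ge0.
pose eps := - dotv G w / (enorm w + 1).
have eps0 : 0 < eps by rewrite divr_gt0 ?oppr_gt0.
have epsW : eps * enorm w = - dotv G w - eps by rewrite /eps; field; rewrite gt_eqF.
have [d [d0 Hd]] := dG eps eps0.
have [s /andP [s0 _] sw] := exists_small_scale (enorm_ge0 w) d0.
have := Hd (s *: w); rewrite enormZ gtr0_norm // dotvZr => /(_ sw) /ler_normlP [_].
have seps : eps * (s * enorm w) = s * (- dotv G w - eps) by rewrite -epsW; ring.
rewrite seps => rho_sw.
have /yu : rho (y + s *: w) < 0 by have := mulr_gt0 s0 eps0; lra.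
by rewrite (addrC y) addrK dotvZr pmulr_rle0.
Qed.

Lemma polar_halfspace G u : G != 0 ->
  (forall w, dotv G w < 0 -> dotv u w <= 0) -> exists2 c : R, 0 <= c & u = c *: G.
Proof.
move=> G0 uG; have GG : 0 < dotv G G by rewrite dotvv_gt0.
have uG0 : 0 <= dotv u G.
  by have := uG (- G); rewrite !dotvNr oppr_lt0 oppr_le0 => ->.
pose c := dotv u G / dotv G G; pose r := u - c *: G.
have Gr : dotv G r = 0.
  by rewrite dotvBr dotvZr (dotvC G u) /c mulfVK ?gt_eqF ?subrr.
have rr : dotv r r = dotv u r by rewrite {1}/r dotvBl dotvZl Gr mulr0 subr0.
have rE : u - c *: G = r by [].
clearbody r.
(* testing against [r - d G] gives [r.r <= d (u.G)] for every [d > 0] *)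
have rr0 : dotv r r <= 0.
  apply/ler_addgt0Pr => e e0; rewrite add0r.
  have uG1 : 0 < dotv u G + 1 by lra.
  pose d := e / (dotv u G + 1); have d0 : 0 < d by rewrite divr_gt0.
  have de : d * (dotv u G + 1) = e by rewrite mulfVK ?gt_eqF.
  have := uG (r - d *: G).
  rewrite !dotvBr !dotvZr Gr sub0r oppr_lt0 (mulr_gt0 d0 GG) -rr => /(_ isT).
  nra.
exists c; first exact: divr_ge0 uG0 (ltW GG).
by apply/eqP; rewrite -subr_eq0 rE -dotvv_eq0 eq_le rr0 dotvv_ge0.
Qed.

Lemma C11_normal_collinear (A : set E) y u v : C11_boundary A -> bdry A y ->
  normal_at A y u -> normal_at A y v -> u != 0 -> exists2 l : R, 0 <= l & v = l *: u.
Proof.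
move=> [rho [G [dG [_ [-> G0]]]]] Ay Au Av u0.
have ry := has_grad_closure_sublevel (dG y) Ay.1.
have [c c0 uE] := polar_halfspace (G0 y Ay) (normal_at_sublevel (dG y) ry Au).
have [c' c'0 vE] := polar_halfspace (G0 y Ay) (normal_at_sublevel (dG y) ry Av).
have cn0 : c != 0 by apply: contraNneq u0 => c_eq0; rewrite uE c_eq0 scale0r.
by exists (c' / c); rewrite ?divr_ge0 // uE vE scalerA mulfVK.
Qed.

End SmoothBoundary.

Section ProjectionAndRays.
Variables (R : realType) (n : nat).
Local Notation E := 'rV[R]_n.
Implicit Types (x y w q : E) (A La Om U : set E) (T : E -> E).

Lemma closure_proj_on_bdry La Om x y : La !=set0 -> ebounded La ->
  strictly_convex_set La -> closure La y -> normal_at La y (x - y) -> x != y ->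
  closure Om x -> closure (proj_on La @` Om `&` bdry La) y.
Proof.
move=> La0 Labd Lasc Lay yx xy Omx B /nbhs_eball [e e0 eB].
have ycl := normal_at_closure Lasc Lay yx.
have nLax : ~ closure La x by move=> /(normal_at_self ycl) /eqP; apply/negP.
have [e' e'0 e'La] := nbhs_eball (open_nbhs_nbhs
  (conj (closed_openC (@closed_closure _ La)) nLax)).
have m0 : 0 < Num.min e e' by rewrite lt_min e0 e'0.
have [w Om_w] := closure_eball Omx m0; rewrite lt_min => /andP [we we'].
have [pcl pmin] := proj_onP w La0 Labd.
have pw := normal_at_proj Lasc pcl pmin.
exists (proj_on La w); split.
  by split; [exists w | exact: normal_at_bdry pcl pw (e'La _ we')].
by apply/eB/(le_lt_trans _ we)/(normal_at_nonexpansive Lay pcl ycl pw).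
Qed.

Lemma closure_bdry_setI_sub A B C : closure (bdry (A `&` B) `&` C) `<=` closure A.
Proof.
move=> z cz; rewrite ((closure_id _).1 (@closed_closure _ A)).
by apply: (closureS _ cz) => w [[cw _] _]; apply: (closureS _ cw) => v [].
Qed.

Lemma strictly_convex_near A q x (e : R) : strictly_convex_set A ->
  closure A q -> closure A x -> q != x -> 0 < e ->
  exists2 t : R, 0 < t < 1 &
    A (t *: q + (1 - t) *: x) /\ enorm (t *: q + (1 - t) *: x - x) < e.
Proof.
move=> Asc Aq Ax qx e0; have [t t01 te] := exists_small_scale (enorm_ge0 (q - x)) e0.
exists t => //; split; first exact: Asc.
have -> : t *: q + (1 - t) *: x - x = t *: (q - x).
  by apply/rowP => i; rewrite !mxE; ring.
by case/andP: t01 => t0 _; rewrite enormZ gtr0_norm.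
Qed.

Lemma ray_L_shift T x (s : R) : T x != x -> 0 <= s ->
  ray_L T x (T x + s *: (x - T x)).
Proof.
move=> Txx s0; exists (s * enorm (x - T x)); first by rewrite /= mulr_ge0 ?enorm_ge0.
by rewrite scalerA mulfK // enorm_eq0 subr_eq0 eq_sym.
Qed.

(* A point of [K_set] sees no other point of [closure Om] along its ray: a segment
   from such a point to [x] would enter the interior of [Om `&` U] on the ray. *)
Lemma K_set_ray_closure Om U T x q (l : R) : open Om -> strictly_convex_set Om ->
  K_set (Om `&` U) T x -> nbhs x U -> 0 <= l -> q - T x = l *: (x - T x) ->
  closure Om q -> q = x.
Proof.
move=> Omo Omsc [[clOU_x _] [Txx ray_x]] Ux l0 qE Om_q.
have [//|qx] := eqVneq q x; exfalso.
have [e e0 eU] := nbhs_eball (nbhs_interior Ux).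
have Om_x := closureS (@subIsetl _ Om U) clOU_x.
have [t /andP [t0 t1] [Om_p pe]] := strictly_convex_near Omsc Om_q Om_x qx e0.
set p := t *: q + (1 - t) *: x in Om_p pe.
have OU_p : nbhs p (Om `&` U) by apply: filterI; [exact: open_nbhs_nbhs | exact: eU].
have ray_p : ray_L T x p.
  have -> : p = T x + (t * l + 1 - t) *: (x - T x).
    rewrite /p; have -> : q = T x + l *: (x - T x) by rewrite -qE addrC subrK.
    by apply/rowP => i; rewrite !mxE; ring.
  by apply: ray_L_shift => //; nra.
have [_] := ray_x p (conj ray_p (subset_closure (nbhs_singleton OU_p))).
by apply; apply: filterS OU_p; exact: subset_closure.
Qed.

End ProjectionAndRays.

Theorem lemma4p3 (R : realType) (n : nat)
  (leb : {measure set 'rV[R]_n -> \bar R}) (Hleb : is_lebesgue leb)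
  (f g : 'rV[R]_n -> R)
  (* f, g nonnegative, in L^1, compactly supported *)
  (Hf_meas : measurable_fun setT f) (Hg_meas : measurable_fun setT g)
  (Hf_ge0 : forall x, 0 <= f x) (Hg_ge0 : forall x, 0 <= g x)
  (Hf_int : leb.-integrable setT (fun x => (f x)%:E))
  (Hg_int : leb.-integrable setT (fun x => (g x)%:E))
  (Hf_supp : exists K : set 'rV[R]_n, compact K /\ forall x, ~ K x -> f x = 0)
  (Hg_supp : exists K : set 'rV[R]_n, compact K /\ forall x, ~ K x -> g x = 0)
  (* standing assumptions on Omega = {f>0}, Lambda = {g>0} *)
  (HOm_open : open (pos_set f)) (HOm_bdd : ebounded (pos_set f))
  (HOm_sc : strictly_convex_set (pos_set f))
  (HLa_open : open (pos_set g)) (HLa_bdd : ebounded (pos_set g))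
  (HLa_sc : strictly_convex_set (pos_set g))
  (Hf_bds : exists c C : R, 0 < c /\ forall x, pos_set f x -> c <= f x <= C)
  (Hg_bds : exists c C : R, 0 < c /\ forall x, pos_set g x -> c <= g x <= C)
  (* additional assumptions of the lemma *)
  (HOm_dom : is_domain (pos_set f))
  (HLa_dom : is_domain (pos_set g)) (HLa_uc : uniformly_convex_set (pos_set g))
  (HLa_C11 : C11_boundary (pos_set g))
  (* the mass m *)
  (m : R)
  (Hm1 : (\int[leb]_x (`|Num.min (f x) (g x)|)%:E <= m%:E)%E)
  (Hm2 : (m%:E <= \int[leb]_x (`|f x|)%:E)%E)
  (Hm3 : (m%:E <= \int[leb]_x (`|g x|)%:E)%E)
  (* the optimal plan gamma_m and its Brenier-type representation *)
  (gam : {measure set ('rV[R]_n * 'rV[R]_n)%type -> \bar R})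
  (Psi : 'rV[R]_n -> \bar R) (fm gm : 'rV[R]_n -> R)
  (Hadm : admissible leb f g m gam)
  (Hopt : forall gam' : {measure set ('rV[R]_n * 'rV[R]_n)%type -> \bar R},
            admissible leb f g m gam' -> (cost gam <= cost gam')%E)
  (Huniq : forall gam' : {measure set ('rV[R]_n * 'rV[R]_n)%type -> \bar R},
            admissible leb f g m gam' -> (cost gam' <= cost gam)%E ->
            forall C, measurable C -> gam' C = gam C)
  (HPsi : econvex Psi)
  (Hfm_meas : measurable_fun setT fm) (Hgm_meas : measurable_fun setT gm)
  (Hfm : forall x, 0 <= fm x <= f x) (Hgm : forall y, 0 <= gm y <= g y)
  (Hdiff_fm : leb.-negligible [set x | 0 < fm x /\ ~ edifferentiable Psi x])
  (Hdiff_gm : leb.-negligible [set y | 0 < gm y /\ ~ edifferentiable (legendre Psi) y])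
  (Hgam1 : forall C, measurable C ->
     gam C = (\int[leb]_(x in [set x | edifferentiable Psi x /\ C (x, egrad Psi x)])
                (fm x)%:E)%E)
  (Hgam2 : forall C, measurable C ->
     gam C = (\int[leb]_(y in [set y | edifferentiable (legendre Psi) y /\
                                    C (egrad (legendre Psi) y, y)]) (gm y)%:E)%E)
  (Hpush : forall B : set 'rV[R]_n, measurable B ->
     (\int[leb]_(x in [set x | edifferentiable Psi x /\ B (egrad Psi x)]) (fm x)%:E)%E =
     (\int[leb]_(y in B) (gm y)%:E)%E)
  (* the extension tilde Psi_m *)
  (Psit : 'rV[R]_n -> R)
  (HPsit_conv : rconvex Psit)
  (HPsit_diff : forall x, exists p, has_grad Psit x p)
  (HPsit_C1 : continuous (rgrad Psit))
  (HPsit_eq : forall x,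
     (U_set (pos_set f) (pos_set g) (Gamma_set leb Psi fm gm) `&` pos_set f) x ->
     (Psit x)%:E = Psi x)
  (HPsit_id : forall x,
     (pos_set g `\` closure (V_set (pos_set f) (pos_set g) (Gamma_set leb Psi fm gm))) x ->
     rgrad Psit x = x)
  (HPsit_range : range (rgrad Psit) = closure (pos_set g))
  (HPsit_homeo :
     let D := closure (U_set (pos_set f) (pos_set g) (Gamma_set leb Psi fm gm) `&` pos_set f) in
     let D' := closure (V_set (pos_set f) (pos_set g) (Gamma_set leb Psi fm gm) `&` pos_set g) in
     set_bij D D' (rgrad Psit) /\
     {within D', continuous (inv_on (rgrad Psit) D)})
  :
  let Om := pos_set f in
  let La := pos_set g in
  let U := U_set Om La (Gamma_set leb Psi fm gm) in
  let V := V_set Om La (Gamma_set leb Psi fm gm) in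
  let T := rgrad Psit in
  let Tinv := inv_on T (closure (U `&` Om)) in
  let S1 := T @^-1` bd_nt La V Tinv `&` K_set (Om `&` U) T in
  let A2 := S1 `\` bdry U in
  T @` A2 `<=`
    relbdry (bdry La) (proj_on La @` Om `&` bdry La)
    `\` relbdry (bdry La) (bdry (Om `&` La) `&` bdry La).
Proof.
move=> Om La U V T Tinv S1 A2 _ [x [[[bdLa_y [_ normal_y]] K_x] bdU_x] <-].
have [bdOU_x [Txx _]] := K_x.
have clOU_x : closure (Om `&` U) x by case: bdOU_x.
have U_x : nbhs x U.
  apply: contrapT => nU_x; apply: bdU_x; split => //.
  by apply: (closureS _ clOU_x) => z [].
have nOm_x : ~ Om x.
  by move=> Om_x; apply: bdOU_x.2; apply: filterI => //; exact: open_nbhs_nbhs.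
have Tinv_Tx : Tinv (T x) = x.
  have [[_ injT _] _] := HPsit_homeo.
  apply: xget_unique; first by split => //; rewrite setIC.
  by move=> x' [D_x' Tx']; apply: injT; rewrite ?inE // setIC.
have normal_x : normal_at La (T x) (x - T x) by move: normal_y; rewrite Tinv_Tx.
have on_ray := K_set_ray_closure HOm_open HOm_sc K_x U_x.
have nclOm_Tx : ~ closure Om (T x).
  move=> /(on_ray _ 0 (lexx 0)); rewrite subrr scale0r => /(_ erefl) Txx_eq.
  by move: Txx; rewrite Txx_eq eqxx.
have La0 : La !=set0 by case: HLa_dom => _ [].
split; last by move=> [_ [/closure_bdry_setI_sub]].
split; first exact: bdLa_y.
split.
  apply: closure_proj_on_bdry La0 HLa_bdd HLa_sc bdLa_y.1 normal_x _ _.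
    by rewrite eq_sym.
  by apply: (closureS _ clOU_x) => z [].
move=> [[[w Om_w pw] _] _].
have [pcl pmin] := proj_onP w La0 HLa_bdd.
have normal_w : normal_at La (proj_on La w) (w - proj_on La w).
  by move=> z La_z; apply: normal_at_proj HLa_sc pcl pmin z (subset_closure La_z).
rewrite pw in normal_w.
have xTx0 : x - T x != 0 by rewrite subr_eq0 eq_sym.
have [l l0 wE] := C11_normal_collinear HLa_C11 bdLa_y normal_x normal_w xTx0.
by apply: nOm_x; rewrite -(on_ray w l l0 wE (subset_closure Om_w)).
Qed.
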